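(* Let $A$ be a finite abelian group and $H$ a subgroup of $A$. Then $\Gamma_{A,H}$ admits a total perfect code if and only if, up to isomorphism (of $A$ carrying $H$ to the indicated subgroup), one of the following holds: (1) $A=\mathbb{Z}_2^n\times Q$ and $|H|=2$, where $n\ge 1$ and $Q$ is an abelian group of odd order; (2) $A=\mathbb{Z}_2^n\times\mathbb{Z}_{2^{k_1}}\times\cdots\times\mathbb{Z}_{2^{k_t}}\times Q$ with $n\ge1$, $t\ge 1$, $k_j\ge 2$ for all $j$, $Q$ an abelian group of odd order, and $H=\{0,(x_1,\dots,x_n,z_1,\dots,z_t,0)\}$ where each $x_i\in\{0,1\}$, each $z_j\in\{0,2^{k_j-1}\}$, and $x_l=1$ for at least one $l\in\{1,\dots,n\}$; (3) $A=\mathbb{Z}_2^n\times\mathbb{Z}_3$ with $n\ge 0$ and $H=\{0\}^n\times\mathbb{Z}_3=\{(0,\dots,0,0),(0,\dots,0,1),(0,\dots,0,2)\}$.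
   Context: Abelian groups are written additively with identity $0$. For a subgroup $H$ of a finite abelian group $A$, the subgroup sum graph $\Gamma_{A,H}$ is the simple undirected graph with vertex set $A$ in which distinct vertices $x,y$ are adjacent if and only if $x+y\in H\setminus\{0\}$. A total perfect code in a graph is a set $C$ of vertices such that every vertex of the graph (whether in $C$ or not) has exactly one neighbour in $C$. (The paper prints $z_j\in\{0,2^{k_j-2}\}$ in (2), which is a misprint: $H$ must be a subgroup of order $2$, forcing $z_j\in\{0,2^{k_j-1}\}$.) *)

From mathcomp Require Import all_boot all_order all_algebra.
Set Implicit Arguments. Unset Strict Implicit. Unset Printing Implicit Defensive.
Import GRing.Theory.
Local Open Scope ring_scope.

Section SubgroupSumGraph.
Variable A : finZmodType.

Definition is_subgroup (H : {set A}) : bool :=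
  (0 \in H) && [forall x in H, forall y in H, x - y \in H].

Definition ssg_adj (H : {set A}) (x y : A) : bool :=
  [&& x != y, x + y \in H & x + y != 0].

Definition total_perfect_code (H C : {set A}) : Prop :=
  forall v : A, #|[set c in C | ssg_adj H v c]| = 1%N.

Definition has_total_perfect_code (H : {set A}) : Prop :=
  exists C : {set A}, total_perfect_code H C.

(* An explicit isomorphism  Z_{m_0} x ... x Z_{m_{r-1}} x Q  ~=  A,
   (c_0,...,c_{r-1},q) |-> \sum_i c_i g_i + q,
   where Q is a subgroup of A.  The map is a homomorphism because
   m_i g_i = 0, and a bijection because every x in A has a unique
   representation with 0 <= c_i < m_i and q in Q. *)
Definition coord_rep (ms : seq nat) (g : seq A) (Q : {set A})
    (x : A) (c : seq nat) (q : A) : bool :=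
  [&& size c == size ms, all2 (fun ci mi => ci < mi)%N c ms, q \in Q &
      x == \sum_(i < size ms) (nth 0 g i) *+ (nth 0%N c i) + q].

Definition decomp (ms : seq nat) (g : seq A) (Q : {set A}) : Prop :=
  [/\ size g = size ms, is_subgroup Q,
      (forall i, (i < size ms)%N -> (nth 0 g i) *+ (nth 0%N ms i) = 0) &
      forall x : A, exists! cq : seq nat * A, coord_rep ms g Q x cq.1 cq.2].

Definition case1 (H : {set A}) : Prop :=
  exists (n : nat) (g : seq A) (Q : {set A}),
    [/\ (1 <= n)%N, odd #|Q|, decomp (nseq n 2%N) g Q & #|H| = 2%N].

Definition case2 (H : {set A}) : Prop :=
  exists (n : nat) (ks : seq nat) (g : seq A) (Q : {set A})
         (xs zs : seq bool),
    [/\ (1 <= n)%N, (1 <= size ks)%N, all (fun k => 2 <= k)%N ks, odd #|Q| &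
        decomp (nseq n 2%N ++ [seq (2 ^ k)%N | k <- ks]) g Q] /\
    [/\ size xs = n, size zs = size ks, has id xs &
        H = [set 0; \sum_(i < n) (nth 0 g i) *+ nth false xs i
                   + \sum_(j < size ks)
                       (nth 0 g (n + j)) *+ (nth false zs j * 2 ^ (nth 0%N ks j).-1)%N]].

Definition case3 (H : {set A}) : Prop :=
  exists (n : nat) (g : seq A),
    decomp (rcons (nseq n 2%N) 3%N) g [set 0] /\
    H = [set 0; nth 0 g n; (nth 0 g n) *+ 2].

End SubgroupSumGraph.

(* If C is a total perfect code, the code neighbour s of 0 lies in H, 0 is in C, and any
   h in H other than 0, s, -s would have both 0 and s as code neighbours; so H = {0, s, -s}.
   When 2s = 0, s is not a double: the only candidate neighbour of a vertex a with 2a = s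
   is a itself.  When s has order 3, every double lies in H.  Conversely A itself, resp.
   {x | 2x in {0, s}}, is then a total perfect code.
   The three families of the theorem are exactly the groups with such an H.  Write A as
   the product of cyclic 2-groups and an odd part Q: an involution is not a double iff one
   of its coordinates in a factor Z_2 is 1, which gives cases (1) and (2).  If s has
   order 3 and 2A lies in <s>, then A is the direct product of the elementary abelian
   group {x | 2x = 0} and <s>, which is case (3). *)

From mathcomp Require Import all_boot all_order all_algebra all_fingroup all_solvable.
Set Implicit Arguments. Unset Strict Implicit. Unset Printing Implicit Defensive.
Import GRing.Theory FinRing.Theory.
Local Open Scope ring_scope.

Lemma in_set3 (T : finType) (x a b c : T) :
  (x \in [set a; b; c]) = [|| x == a, x == b | x == c].
Proof. by rewrite !inE orbA. Qed.

Section Subgroup.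
Variables (A : finZmodType) (H : {set A}).
Hypothesis sgH : is_subgroup H.

Lemma subgroup0 : 0 \in H. Proof. by case/andP: sgH. Qed.

Lemma subgroupB x y : x \in H -> y \in H -> x - y \in H.
Proof. by case/andP: sgH => _ /forall_inP sub Hx Hy; exact: (forall_inP (sub x Hx)). Qed.

Lemma subgroupN x : x \in H -> - x \in H.
Proof. by move=> Hx; rewrite -sub0r subgroupB // subgroup0. Qed.

Lemma subgroupD x y : x \in H -> y \in H -> x + y \in H.
Proof. by move=> Hx Hy; rewrite -[y]opprK subgroupB ?subgroupN. Qed.

End Subgroup.

Section Elements.
Variable A : finZmodType.

Lemma opp_involution (s : A) : s + s = 0 -> - s = s.
Proof. by move=> ss; apply/eqP; rewrite eq_sym -addr_eq0 ss. Qed.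

Lemma double_eq_self (s : A) : s + s = s -> s = 0.
Proof. by move=> ss; rewrite -(addrK s s) ss subrr. Qed.

Lemma sub_double_sub (v h : A) : (h - v) + (h - v) = (h + h) - (v + v).
Proof. by rewrite addrACA opprD. Qed.

End Elements.

Section SubgroupFacts.
Variable A : finZmodType.

Lemma subgroup_group_set (Q : {set A}) : is_subgroup Q -> group_set Q.
Proof.
by move=> sgQ; apply/group_setP; split=> [|x y]; [exact: subgroup0 | exact: subgroupD].
Qed.

Lemma odd_subgroup_involution (Q : {set A}) q :
  is_subgroup Q -> odd #|Q| -> q \in Q -> q + q = 0 -> q = 0.
Proof.
move=> sgQ oddQ Qq qq; apply/eqP; rewrite -(order_eq1 (q : A)).
have dvd_q2 : (#[q]%g %| 2)%N by rewrite order_dvdn zmodXgE mulr2n qq.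
have /dvdn_odd odd_q : (#[q]%g %| #|Group (subgroup_group_set sgQ)|)%N by apply: order_dvdG.
have := dvdn_leq (isT : (0 < 2)%N) dvd_q2; have := order_gt0 q; move: (odd_q oddQ).
by case: #[q]%g => [|[|[|]]].
Qed.

Lemma set3_involution (s : A) : s + s = 0 -> [set 0; s; -s] = [set 0; s].
Proof. by move=> ss; apply/setP => x; rewrite opp_involution // in_set3 !inE orbb. Qed.

Lemma card2_subgroup (H : {set A}) : is_subgroup H -> #|H| = 2%N ->
  exists s, [/\ s != 0, s + s = 0 & H = [set 0; s; -s]].
Proof.
move=> sgH cardH.
have : #|H :\ 0| = 1%N by move: cardH; rewrite (cardsD1 0) subgroup0 //; case.
move/eqP/cards1P=> [s Es]; have : s \in H :\ 0 by rewrite Es set11.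
rewrite !inE => /andP[s0 Hs].
have HE : H = [set 0; s].
  apply/setP => x; rewrite !inE -(in_set1 x s) -Es !inE.
  by case: eqVneq => [->|]; rewrite ?subgroup0.
have ss : s + s = 0.
  have : s + s \in H by rewrite subgroupD.
  rewrite HE !inE => /orP[/eqP //|/eqP/double_eq_self s0'].
  by rewrite s0' eqxx in s0.
by exists s; rewrite set3_involution.
Qed.

End SubgroupFacts.

Section TotalPerfectCode.
Variables (A : finZmodType) (H : {set A}).
Hypothesis sgH : is_subgroup H.

Lemma ssg_adj_sub (v h : A) :
  ssg_adj H v (h - v) = [&& v + v != h, h \in H & h != 0].
Proof. by rewrite /ssg_adj subrKC eq_sym subr_eq eq_sym. Qed.

Section CodeProperties.
Variable C : {set A}.
Hypothesis codeC : total_perfect_code H C.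

Lemma code_nbr_exists v : exists2 c, c \in C & ssg_adj H v c.
Proof.
have /eqP/cards1P[c Ec] := codeC v.
by have := set11 c; rewrite -Ec inE => /andP[]; exists c.
Qed.

Lemma code_nbr_unique v c c' :
  c \in C -> ssg_adj H v c -> c' \in C -> ssg_adj H v c' -> c = c'.
Proof.
move=> Cc vc Cc' vc'; have /eqP/cards1P[d Ed] := codeC v.
have memE x : x \in C -> ssg_adj H v x -> x = d.
  by move=> Cx vx; apply/set1P; rewrite -Ed inE Cx.
by rewrite (memE c Cc vc) (memE c' Cc' vc').
Qed.

Lemma code_meets_subgroup : exists s, [/\ s \in C, s \in H, s != 0 & 0 \in C].
Proof.
have [s Cs adj0s] := code_nbr_exists 0.
have /and3P[_ Hs s0] := adj0s; rewrite add0r in Hs s0.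
have [t Ct /and3P[st Hst st0]] := code_nbr_exists s.
have Ht : t \in H by rewrite -(addKr s t) subgroupD ?subgroupN.
suff t0 : t = 0 by exists s; rewrite -t0.
apply/eqP; apply: contraR st => t0; apply/eqP.
by apply: (code_nbr_unique Cs adj0s Ct); rewrite /ssg_adj add0r Ht eq_sym t0.
Qed.

Lemma code_subgroup_eq s :
  s \in C -> s \in H -> s != 0 -> 0 \in C -> H = [set 0; s; -s].
Proof.
move=> Cs Hs s0 C0; apply/setP => v; rewrite in_set3.
apply/idP/idP => [Hv|/or3P[]/eqP->]; rewrite ?subgroup0 ?subgroupN //.
apply/negPn/negP; rewrite !negb_or => /and3P[v0 vs vNs].
have adj0 : ssg_adj H v 0 by rewrite /ssg_adj addr0 v0 Hv.
have adjs : ssg_adj H v s by rewrite /ssg_adj vs subgroupD // addr_eq0.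
by move: s0; rewrite (code_nbr_unique C0 adj0 Cs adjs) eqxx.
Qed.

Lemma code_involution_undoubled s a : H = [set 0; s; -s] -> s + s = 0 -> a + a <> s.
Proof.
move=> HE ss aa; have [c _ /and3P[ac Hac ac0]] := code_nbr_exists a.
move: Hac; rewrite HE (opp_involution ss) in_set3 (negbTE ac0) orbb /= -aa.
by move/eqP/addrI => ca; rewrite ca eqxx in ac.
Qed.

Lemma code_mem_of_nbr x c :
  x + x \notin H -> c \in C -> ssg_adj H (- x) c -> x \in C.
Proof.
move=> xx Cc adjc; have /and3P[_ Hxc _] := adjc.
have [d Cd /and3P[_ Hcd cd0]] := code_nbr_exists (- c).
have -> : x = d; last by [].
apply: contraTeq cd0 => xd; apply/negPn/eqP.
have Hxd : - x + d \in H by rewrite -[d](addNKr c) addrA subgroupD.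
suff adjd : ssg_adj H (- x) d by rewrite (code_nbr_unique Cd adjd Cc adjc) addNr.
rewrite /ssg_adj Hxd addrC subr_eq0 [d == x]eq_sym xd !andbT.
by apply: contra xx => /eqP xdE; rewrite -[x + x]opprK opprD {2}xdE subgroupN.
Qed.

Section Order3.
Variable s : A.
Hypotheses (HE : H = [set 0; s; -s]) (ss : s + s != 0).

Lemma subgroup_double_neq0 h : h \in H -> h != 0 -> h + h != 0.
Proof.
by rewrite HE in_set3 => /or3P[]/eqP->; rewrite ?eqxx // => _; rewrite -?opprD ?oppr_eq0.
Qed.

Lemma code_doubles_in_subgroup x : x + x \in H.
Proof.
(* Otherwise, with c the code neighbour of -x and h = c - x, both x and c = x + h
   would be code neighbours of h - x. *)
apply: contraT => xx.
have [c Cc adjc] := code_nbr_exists (- x); have Cx := code_mem_of_nbr xx Cc adjc.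
case/and3P: adjc => _; move Eh: (- x + c) => h Hh h0.
have cE : c = x + h by rewrite -Eh addNKr.
have adjx : ssg_adj H (h - x) x.
  rewrite /ssg_adj subrK Hh h0 !andbT; apply: contra xx => /eqP e.
  by rewrite -{1}e subrK.
have adjc : ssg_adj H (h - x) c.
  rewrite /ssg_adj cE addrA subrK subgroupD // subgroup_double_neq0 // !andbT.
  apply: contra xx; rewrite addrC => /eqP/addIr xE.
  by rewrite -{1}xE addNr subgroup0.
by move: h0; rewrite -Eh -(code_nbr_unique Cx adjx Cc adjc) addNr eqxx.
Qed.

End Order3.
End CodeProperties.

Lemma total_perfect_code_by_sub (C : {set A}) (f : A -> A) :
    (forall v h, (h - v \in C) && ssg_adj H v (h - v) = (h == f v)) ->
  total_perfect_code H C.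
Proof.
move=> Cf v; apply/eqP/cards1P; exists (f v - v); apply/setP => c.
by rewrite !inE -{1 2}(addrK v c) Cf [c == _]eq_sym subr_eq eq_sym.
Qed.

End TotalPerfectCode.

Section Characterization.
Variables (A : finZmodType) (H : {set A}).
Hypothesis sgH : is_subgroup H.

Definition admissible_generator (s : A) : Prop :=
  [/\ s != 0, H = [set 0; s; -s] &
      (s + s = 0 /\ forall a, a + a <> s) \/ (s + s != 0 /\ forall x, x + x \in H)].

Lemma code_of_undoubled_involution (s : A) :
    H = [set 0; s; -s] -> s + s = 0 -> (forall a, a + a <> s) ->
  total_perfect_code H [set: A].
Proof.
move=> HE ss nh; apply: (@total_perfect_code_by_sub _ _ _ (fun=> s)) => v h.
rewrite in_setT ssg_adj_sub HE (opp_involution ss) in_set3 orbb.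
case: (eqVneq h s) => [->|hs]; last by rewrite orbF andbN andbF.
have s0 : s != 0 by apply/eqP => s0; apply: (nh 0); rewrite addr0 s0.
rewrite orbT s0 !andbT /=; apply/eqP; exact: nh.
Qed.

Lemma code_of_order3 (s : A) :
    s != 0 -> H = [set 0; s; -s] -> s + s = - s -> (forall x, x + x \in H) ->
  total_perfect_code H [set x | x + x \in [set 0; s]].
Proof.
move=> s0 HE ss dbl; have nn : - s + - s = s by rewrite -opprD ss opprK.
have sNs : (s == - s) = false.
  by apply: contraNF s0 => /eqP e; rewrite -oppr_eq0 -ss {1}e addNr.
have Ns0 : (- s == 0) = false by rewrite oppr_eq0 (negbTE s0).
have N0s : (0 == - s) = false by rewrite eq_sym.
(* Both [v + v] and [h] range over [{0, s, -s}]: the check is a finite table. *)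
apply: (@total_perfect_code_by_sub _ _ _ (fun v => if v + v == - s then s else - s)).
move=> v h; have := dbl v.
rewrite HE in_set3 inE ssg_adj_sub sub_double_sub in_set3 in_set2.
case/or3P=> /eqP->; rewrite ?eqxx ?N0s ?[- s == s]eq_sym ?sNs /=.
all: have [->|h0] := eqVneq h 0; last have [->|hs] := eqVneq h s;
  last have [->|hNs] := eqVneq h (- s);
  last by rewrite /= !andbF ?(negbTE hs) ?(negbTE hNs).
all: by rewrite ?ss ?nn ?subr0 ?opprK ?subrr ?addNr ?eqxx ?N0s ?[0 == s]eq_sym ?(negbTE s0)
  ?[- s == s]eq_sym ?sNs ?Ns0 /= ?andbF.
Qed.

Lemma double_eq_opp (s : A) :
  s != 0 -> s + s != 0 -> s + s \in [set 0; s; -s] -> s + s = - s.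
Proof.
move=> s0 ss; rewrite in_set3 (negbTE ss) /= => /orP[/eqP/double_eq_self s0'|/eqP //].
by rewrite s0' eqxx in s0.
Qed.

Theorem has_total_perfect_codeP :
  has_total_perfect_code H <-> exists s, admissible_generator s.
Proof.
split=> [[C codeC]|[s [s0 HE [[ss nh]|[ss dbl]]]]].
- have [s [Cs Hs s0 C0]] := code_meets_subgroup sgH codeC.
  have HE := code_subgroup_eq sgH codeC Cs Hs s0 C0.
  exists s; split=> //; have [ss|ss] := eqVneq (s + s) 0; [left|right]; split=> //.
    by move=> a; exact (code_involution_undoubled codeC HE ss).
  exact (code_doubles_in_subgroup sgH codeC HE ss).
- by exists [set: A]; apply: code_of_undoubled_involution HE ss nh.
- exists [set x | x + x \in [set 0; s]]; apply: code_of_order3 => //.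
  by apply: double_eq_opp; rewrite // -HE.
Qed.

End Characterization.

Lemma all2_ltnP (c ms : seq nat) : size c = size ms ->
  reflect (forall i, (i < size ms)%N -> (nth 0 c i < nth 0 ms i)%N)
          (all2 (fun ci mi => ci < mi)%N c ms).
Proof.
move=> sc; rewrite all2E sc eqxx /=.
apply: (iffP (all_nthP (0, 0)%N)); rewrite size_zip sc minnn => lt i /lt.
  by rewrite nth_zip.
by rewrite nth_zip.
Qed.

Section Coordinates.
Variables (A : finZmodType) (ms : seq nat) (g : seq A) (Q : {set A}).

Definition coord_sum (c : seq nat) (q : A) : A :=
  \sum_(i < size ms) nth 0 g i *+ nth 0%N c i + q.

Lemma coord_repE x c q : coord_rep ms g Q x c q =
  [&& size c == size ms, all2 (fun ci mi => ci < mi)%N c ms, q \in Q & x == coord_sum c q].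
Proof. by []. Qed.

Lemma coord_rep_sum x c q : coord_rep ms g Q x c q -> x = coord_sum c q.
Proof. by case/and4P=> _ _ _ /eqP. Qed.

Lemma coord_rep_mem x c q : coord_rep ms g Q x c q -> q \in Q.
Proof. by case/and4P. Qed.

Hypothesis decQ : decomp ms g Q.

Lemma decomp_subgroup : is_subgroup Q. Proof. by case: decQ. Qed.

Lemma decomp_order i : (i < size ms)%N -> nth 0 g i *+ nth 0%N ms i = 0.
Proof. by case: decQ => _ _ + _; apply. Qed.

Lemma decomp_coord_exists x : exists c q, coord_rep ms g Q x c q.
Proof. by case: decQ => _ _ _ /(_ x) [[c q] [rep _]]; exists c, q. Qed.

Lemma decomp_coord_unique x c q c' q' :
  coord_rep ms g Q x c q -> coord_rep ms g Q x c' q' -> c = c' /\ q = q'.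
Proof.
case: decQ => _ _ _ /(_ x) [cq [_ uniq_cq]] rep rep'.
by have := uniq_cq (c, q) rep; rewrite (uniq_cq (c', q') rep') => -[-> ->].
Qed.

Lemma decomp_moduli_gt0 i : (i < size ms)%N -> (0 < nth 0%N ms i)%N.
Proof.
have [c [q /and4P[/eqP sc /all2_ltnP lt _ _]]] := decomp_coord_exists 0.
by move=> i_lt; apply: leq_ltn_trans (lt sc i i_lt).
Qed.

Lemma coord_rep0 : coord_rep ms g Q 0 (nseq (size ms) 0%N) 0.
Proof.
rewrite coord_repE size_nseq eqxx (subgroup0 decomp_subgroup) /=.
apply/andP; split.
  by apply/all2_ltnP => [|i i_lt]; rewrite ?size_nseq // nth_nseq i_lt decomp_moduli_gt0.
by rewrite /coord_sum addr0 big1 // => i _; rewrite nth_nseq if_same mulr0n.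
Qed.

Lemma coord_rep_double x c q : coord_rep ms g Q x c q ->
  coord_rep ms g Q (x + x) (mkseq (fun i => (nth 0 c i * 2) %% nth 0 ms i)%N (size ms)) (q + q).
Proof.
case/and4P=> _ _ Qq /eqP->; rewrite coord_repE size_mkseq eqxx.
rewrite subgroupD ?decomp_subgroup //=; apply/andP; split.
  apply/all2_ltnP => [|i i_lt]; rewrite ?size_mkseq //.
  by rewrite nth_mkseq // ltn_pmod ?decomp_moduli_gt0.
rewrite /coord_sum addrACA -big_split /=; apply/eqP; congr (_ + _).
apply: eq_bigr => i _; rewrite nth_mkseq // -mulrnDr addnn -muln2.
rewrite {1}(divn_eq (nth 0 c i * 2) (nth 0 ms i)) mulrnDr mulnC mulrnA.
by rewrite decomp_order // mul0rn add0r.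
Qed.

End Coordinates.

Section CoordinateFacts.
Variables (A : finZmodType) (ms : seq nat) (g : seq A) (Q : {set A}).
Hypothesis decQ : decomp ms g Q.

Lemma coord_rep_eq0 x c q : coord_rep ms g Q x c q ->
  (x == 0) = (c == nseq (size ms) 0%N) && (q == 0).
Proof.
move=> rep; apply/eqP/andP => [x0|[/eqP c0 /eqP q0]].
  by rewrite x0 in rep; have [-> ->] := decomp_coord_unique decQ rep (coord_rep0 decQ).
by have /and4P[_ _ _ /eqP->] := coord_rep0 decQ; case/and4P: rep => _ _ _ /eqP->; rewrite c0 q0.
Qed.

Lemma coord_sum_supp1 c q i : (i < size ms)%N ->
    (forall j, (j < size ms)%N -> j != i -> nth 0%N c j = 0%N) ->
  coord_sum ms g c q = nth 0 g i *+ nth 0%N c i + q.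
Proof.
move=> i_lt c0; rewrite /coord_sum (bigD1 (Ordinal i_lt)) //= big1 ?addr0 // => j ji.
by rewrite c0 ?mulr0n.
Qed.

Lemma not_double_of_Z2_coord x c q i :
    coord_rep ms g Q x c q -> (i < size ms)%N -> nth 0%N ms i = 2%N ->
    nth 0%N c i = 1%N ->
  forall a, a + a <> x.
Proof.
move=> rep i_lt mi ci a aa; have [c' [q' rep']] := decomp_coord_exists decQ a.
have := coord_rep_double decQ rep'; rewrite aa => /(decomp_coord_unique decQ rep)[cE _].
by move: ci; rewrite cE nth_mkseq // mi modnMl.
Qed.

End CoordinateFacts.

Section TwoPrimaryModuli.
Variables (n : nat) (ks : seq nat).
Local Open Scope nat_scope.
Hypothesis ks_ge2 : all (fun k => 2 <= k) ks.

Lemma size_two_moduli : size (nseq n 2 ++ [seq 2 ^ k | k <- ks]) = (n + size ks).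
Proof. by rewrite size_cat size_nseq size_map. Qed.

Lemma nth_two_moduli i : (i < n + size ks) ->
  nth 0 (nseq n 2 ++ [seq 2 ^ k | k <- ks]) i = (if i < n then 2 else 2 ^ nth 0 ks (i - n)).
Proof.
move=> i_lt; rewrite nth_cat size_nseq nth_nseq; case: ltnP => // ni.
by rewrite (nth_map 0) // -(ltn_add2l n) subnKC.
Qed.

Lemma high_index i : n <= i -> i < n + size ks -> exists2 j, j < size ks & i = n + j.
Proof. by move=> n_i i_lt; exists (i - n); rewrite ?subnKC // -(ltn_add2l n) subnKC. Qed.

Lemma two_moduli_ge2 j : (j < size ks) -> (2 <= nth 0 ks j).
Proof. by move=> j_lt; apply: (all_nthP 0 ks_ge2). Qed.

Definition case2_coords (xs zs : seq bool) : seq nat :=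
  mkseq (fun i => if (i < n) then nat_of_bool (nth false xs i)
                  else (nth false zs (i - n) * 2 ^ (nth 0 ks (i - n)).-1)) (n + size ks).

Variables xs zs : seq bool.

Lemma size_case2_coords : size (case2_coords xs zs) = n + size ks.
Proof. exact: size_mkseq. Qed.

Lemma nth_case2_coords_high j : j < size ks ->
  nth 0 (case2_coords xs zs) (n + j) = nth false zs j * 2 ^ (nth 0 ks j).-1.
Proof. by move=> j_lt; rewrite nth_mkseq ?ltn_add2l // ltnNge leq_addr addKn. Qed.

Lemma case2_coords_lt :
  all2 (fun ci mi => ci < mi) (case2_coords xs zs) (nseq n 2 ++ [seq 2 ^ k | k <- ks]).
Proof.
apply/all2_ltnP => [|i]; rewrite size_two_moduli ?size_case2_coords // => i_lt.
rewrite nth_two_moduli //; case: (ltnP i n) => [i_n|n_i].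
  by rewrite /case2_coords nth_mkseq // i_n; case: nth.
have [j j_lt iE] := high_index n_i i_lt; rewrite iE addKn nth_case2_coords_high //.
have := two_moduli_ge2 j_lt; case: (nth 0 ks j) => [|k] // k_gt0.
by case: nth; rewrite ?mul0n ?expn_gt0 // mul1n ltn_exp2l.
Qed.

Lemma case2_coords_double i : i < n + size ks ->
  (nth 0 (case2_coords xs zs) i * 2) %% nth 0 (nseq n 2 ++ [seq 2 ^ k | k <- ks]) i = 0.
Proof.
move=> i_lt; rewrite nth_two_moduli //; case: (ltnP i n) => [i_n|n_i].
  by rewrite /case2_coords nth_mkseq // i_n modnMl.
have [j j_lt iE] := high_index n_i i_lt; rewrite iE addKn nth_case2_coords_high //.
by have := two_moduli_ge2 j_lt; case: (nth 0 ks j) => [|k] // _; rewrite -mulnA -expnSr modnMl.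
Qed.

End TwoPrimaryModuli.

Section Case2Element.
Variables (A : finZmodType) (g : seq A) (n : nat) (ks : seq nat) (Q : {set A}).
Hypotheses (ks_ge2 : all (fun k => 2 <= k)%N ks) (Q0 : 0 \in Q).

Definition case2_elem (xs zs : seq bool) : A :=
  \sum_(i < n) nth 0 g i *+ nth false xs i
  + \sum_(j < size ks) nth 0 g (n + j) *+ (nth false zs j * 2 ^ (nth 0%N ks j).-1)%N.

Lemma case2_coord_rep xs zs : coord_rep (nseq n 2 ++ [seq 2 ^ k | k <- ks])%N g Q
  (case2_elem xs zs) (case2_coords n ks xs zs) 0.
Proof.
rewrite coord_repE size_case2_coords size_two_moduli eqxx case2_coords_lt // Q0 /=.
rewrite /coord_sum addr0 size_two_moduli big_split_ord /=; apply/eqP; congr (_ + _).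
  apply: eq_bigr => i _; rewrite /case2_coords nth_mkseq ?ltn_ord //.
  by rewrite (leq_trans (ltn_ord i)) ?leq_addr.
by apply: eq_bigr => j _; rewrite nth_case2_coords_high // mulnC.
Qed.

End Case2Element.

Section AdmissibleOfCases.
Variable A : finZmodType.

Lemma admissible_of_case1 (H : {set A}) :
  is_subgroup H -> case1 H -> exists s, admissible_generator H s.
Proof.
move=> sgH [n [g [Q [_ oddQ decQ cardH]]]].
have [s [s0 ss HE]] := card2_subgroup sgH cardH.
exists s; split=> //; left; split=> //.
have [c [q rep]] := decomp_coord_exists decQ s; have /and4P[/eqP sc lt_c Qq _] := rep.
have := coord_rep_double decQ rep; rewrite ss.
case/(decomp_coord_unique decQ (coord_rep0 decQ)) => _ /esym qq.
have q0 := odd_subgroup_involution (decomp_subgroup decQ) oddQ Qq qq.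
have [i i_lt ci0] : exists2 i, (i < size c)%N & nth 0%N c i != 0%N.
  apply/(has_nthP (a := predC (pred1 0%N)) 0%N); rewrite has_predC.
  apply: contra s0 => /all_pred1P c0.
  by rewrite (coord_rep_eq0 decQ rep) q0 eqxx andbT {1}c0 sc.
rewrite sc in i_lt; have /(all2_ltnP sc)/(_ i i_lt) := lt_c.
rewrite size_nseq in i_lt; rewrite nth_nseq i_lt.
move=> ci; apply: (not_double_of_Z2_coord decQ rep (i := i)); rewrite ?size_nseq ?nth_nseq ?i_lt //.
by case: (nth 0%N c i) ci0 ci => [|[|]].
Qed.

Lemma admissible_of_case2 (H : {set A}) : case2 H -> exists s, admissible_generator H s.
Proof.
move=> [n [ks [g [Q [xs [zs [[_ _ ks_ge2 _ decQ] [sxs _ hasx HE]]]]]]]].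
have rep := case2_coord_rep g n ks_ge2 (subgroup0 (decomp_subgroup decQ)) xs zs.
rewrite -/(case2_elem g n ks xs zs) in HE; set h := case2_elem g n ks xs zs in rep HE.
set ms := (nseq n 2 ++ _)%N in decQ rep; set cs := case2_coords n ks xs zs in rep.
have low_lt i : (i < n)%N -> (i < size ms)%N.
  by rewrite size_two_moduli => i_lt; apply: leq_trans i_lt (leq_addr _ _).
have [l l_n xl] : exists2 l, (l < n)%N & nth false xs l.
  by rewrite -sxs; apply/(has_nthP (a := id) false).
have csl : nth 0%N cs l = 1%N.
  by rewrite /cs /case2_coords nth_mkseq ?l_n ?xl -?size_two_moduli ?low_lt.
have ml : nth 0%N ms l = 2%N by rewrite nth_cat size_nseq l_n nth_nseq l_n.
have h0 : h != 0.
  rewrite (coord_rep_eq0 decQ rep) negb_and; apply/orP; left; apply/eqP => cs0.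
  by move: csl; rewrite cs0 nth_nseq low_lt.
have hh : h + h = 0.
  apply/eqP; rewrite (coord_rep_eq0 decQ (coord_rep_double decQ rep)) addr0 eqxx andbT.
  apply/eqP/(@eq_from_nth _ 0%N) => [|i]; rewrite size_mkseq ?size_nseq // => i_lt.
  by rewrite nth_mkseq // nth_nseq i_lt case2_coords_double // -size_two_moduli.
exists h; split=> //; first by rewrite set3_involution.
by left; split=> //; exact (not_double_of_Z2_coord decQ rep (low_lt _ l_n) ml csl).
Qed.

Lemma admissible_of_case3 (H : {set A}) : case3 H -> exists s, admissible_generator H s.
Proof.
move=> [n [g [decQ HE]]].
set ms := rcons (nseq n 2) 3 in decQ; set s := nth 0 g n in HE.
have n_lt : (n < size ms)%N by rewrite size_rcons size_nseq.
have nth_ms i : (i < n)%N -> nth 0%N ms i = 2%N.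
  by move=> i_n; rewrite nth_rcons size_nseq i_n nth_nseq i_n.
have s3 : s *+ 3 = 0 by rewrite -(decomp_order decQ n_lt) nth_rcons size_nseq ltnn eqxx.
set e := rcons (nseq n 0%N) 1%N.
have nth_e i : nth 0%N e i = (i == n).
  by rewrite nth_rcons size_nseq nth_nseq; case: ltngtP.
have rep : coord_rep ms g [set 0] s e 0.
  have se : size e = size ms by rewrite !size_rcons !size_nseq.
  rewrite coord_repE se eqxx set11 /=; apply/andP; split.
    apply/(all2_ltnP se) => i; rewrite size_rcons size_nseq ltnS leq_eqVlt.
    case/orP=> [/eqP->|i_n]; first by rewrite nth_e eqxx nth_rcons size_nseq ltnn eqxx.
    by rewrite nth_e ltn_eqF // nth_ms.
  rewrite (coord_sum_supp1 g 0 n_lt) ?nth_e ?eqxx ?addr0 // => j _.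
  by rewrite nth_e => /negbTE->.
have s0 : s != 0.
  rewrite (coord_rep_eq0 decQ rep) negb_and; apply/orP; left; apply/eqP => e0.
  by move: (nth_e n); rewrite e0 nth_nseq n_lt eqxx.
have ss : s + s != 0.
  by apply: contra s0 => /eqP ss; rewrite -s3 mulrSr mulr2n ss add0r.
have dbl x : x + x \in [set 0; s; s *+ 2].
  have [c [q rep_x]] := decomp_coord_exists decQ x; have := coord_rep_double decQ rep_x.
  rewrite (set1P (coord_rep_mem rep_x)) addr0 => /coord_rep_sum->.
  rewrite (coord_sum_supp1 g 0 n_lt) => [|j]; last first.
    rewrite size_rcons size_nseq ltnS leq_eqVlt => /orP[/eqP->|j_n]; first by rewrite eqxx.
    by rewrite nth_mkseq ?nth_ms ?modnMl // (ltn_trans j_n).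
  rewrite nth_mkseq // nth_rcons size_nseq ltnn eqxx addr0 in_set3 -/s.
  have : ((nth 0%N c n * 2) %% 3 < 3)%N by rewrite ltn_pmod.
  by case: (_ %% 3)%N => [|[|[|]]] // _; rewrite ?mulr0n ?mulr1n eqxx ?orbT.
have Ns : - s = s *+ 2 by apply/esym/eqP; rewrite -addr_eq0 -mulrSr s3.
exists s; split=> //; first by rewrite HE Ns.
by right; split=> // x; rewrite HE dbl.
Qed.

End AdmissibleOfCases.

Section DirectProductCoordinates.
Variable A : finZmodType.

Lemma is_subgroup_group (Q : {group A}) : is_subgroup Q.
Proof.
apply/andP; split; first exact: group1.
by apply/forall_inP => x Qx; apply/forall_inP => y Qy; rewrite -zmodVgE -zmodMgE groupM ?groupV.
Qed.

Lemma coord_rep_nil (Q : {set A}) y c q :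
  coord_rep [::] [::] Q y c q = [&& c == [::], q \in Q & y == q].
Proof. by rewrite coord_repE /coord_sum big_ord0 add0r; case: c. Qed.

Lemma coord_rep_cons (Q : {set A}) x b y c0 c q :
  coord_rep (order x :: map order b) (x :: b) Q y (c0 :: c) q =
  (c0 < #[x]%g)%N && coord_rep (map order b) b Q (y - x *+ c0) c q.
Proof.
rewrite !coord_repE /coord_sum big_ord_recl -/(size (map order b)) -addrA subr_eq addrC /=.
under eq_bigr => i _ do rewrite add0n.
by rewrite eqSS -!andbA andbCA.
Qed.

Lemma dprod_cons_cycle (Q G : {group A}) x b :
    ((\big[dprod/1]_(y <- x :: b) <[y]>) \x Q = G)%g ->
  exists G' : {group A},
    [/\ ((\big[dprod/1]_(y <- b) <[y]>) \x Q = G')%g, (<[x]> * G' = G)%g & (<[x]> :&: G' = 1)%g].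
Proof.
rewrite big_cons -dprodA => defG; have [[K G' _ defG'] mulG _ tiG] := dprodP defG.
by exists G'; rewrite -defG'.
Qed.

Lemma dprod_coord_exists (Q G : {group A}) b y :
    ((\big[dprod/1]_(x <- b) <[x]>) \x Q = G)%g -> y \in G ->
  exists c q, coord_rep (map order b) b Q y c q.
Proof.
elim: b G y => [|x b IH] G y.
  by rewrite big_nil dprod1g => <- Qy; exists [::], y; rewrite coord_rep_nil eqxx Qy.
case/dprod_cons_cycle=> G' [defG' <- _] /mulsgP[u z /cycleP[k ->] G'z ->].
have [c [q rep]] := IH _ _ defG' G'z.
exists ((k %% #[x]%g)%N :: c), q; rewrite coord_rep_cons ltn_pmod ?order_gt0 //=.
by rewrite -zmodXgE expg_mod_order zmodXgE zmodMgE addrC addKr.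
Qed.

Lemma dprod_coord_mem (Q G : {group A}) b y c q :
    ((\big[dprod/1]_(x <- b) <[x]>) \x Q = G)%g ->
  coord_rep (map order b) b Q y c q -> y \in G.
Proof.
elim: b G y c => [|x b IH] G y [|c0 c] //.
  by rewrite big_nil dprod1g => <-; rewrite coord_rep_nil => /and3P[_ Qq /eqP->].
case/dprod_cons_cycle=> G' [defG' <- _]; rewrite coord_rep_cons => /andP[_ /(IH _ _ _ defG') G'y].
by rewrite -(subrK (x *+ c0) y) addrC -zmodXgE -zmodMgE mem_mulg ?mem_cycle.
Qed.

Lemma dprod_coord_unique (Q G : {group A}) b y c q c' q' :
    ((\big[dprod/1]_(x <- b) <[x]>) \x Q = G)%g ->
    coord_rep (map order b) b Q y c q -> coord_rep (map order b) b Q y c' q' ->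
  c = c' /\ q = q'.
Proof.
elim: b G y c c' => [|x b IH] G y [|c0 c] [|c0' c'] //.
  by move=> _; rewrite !coord_rep_nil => /and3P[_ _ /eqP<-] /and3P[_ _ /eqP<-].
case/dprod_cons_cycle=> G' [defG' _ tiG]; rewrite !coord_rep_cons.
move=> /andP[lt rep] /andP[lt' rep'].
have : x *+ c0' - x *+ c0 \in (<[x]> :&: G')%g.
  rewrite inE; apply/andP; split.
    by rewrite -!zmodXgE -zmodVgE -zmodMgE groupM ?groupV ?mem_cycle.
  have -> : x *+ c0' - x *+ c0 = (y - x *+ c0) - (y - x *+ c0').
    by rewrite [in RHS]opprB [in RHS]addrC addrA subrK.
  rewrite -zmodVgE -zmodMgE groupM ?groupV //.
  - exact: dprod_coord_mem defG' rep.
  - exact: dprod_coord_mem defG' rep'.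
rewrite tiG => /set1gP/eqP; rewrite subr_eq0 -!zmodXgE => /eqP/eqP.
rewrite eq_expg_mod_order !modn_small // => /eqP c0E; subst c0'.
by have [-> ->] := IH _ _ _ _ defG' rep rep'.
Qed.

Lemma decomp_of_dprod b (Q : {group A}) :
  ((\big[dprod/1]_(x <- b) <[x]>) \x Q = [set: A])%g -> decomp (map order b) b Q.
Proof.
move=> defA; split; rewrite ?size_map ?is_subgroup_group //.
  by move=> i i_lt; rewrite (nth_map 0) // -zmodXgE expg_order.
move=> x; have [c [q rep]] := dprod_coord_exists defA (in_setT x).
exists (c, q); split=> // -[c' q'] rep'.
by have [-> ->] := dprod_coord_unique defA rep rep'.
Qed.

End DirectProductCoordinates.

Lemma bit_of_lt2 c : (c < 2)%N -> c = (c == 1%N) :> nat.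
Proof. by case: c => [|[|]]. Qed.

Lemma double_mod_pow2_eq0 c k : (2 <= k)%N -> (c < 2 ^ k)%N -> ((c * 2) %% 2 ^ k = 0)%N ->
  c = ((c != 0%N) * 2 ^ k.-1)%N.
Proof.
case: k => [|k] // _; rewrite expnSr => c_lt /eqP; rewrite -/(dvdn _ _) dvdn_pmul2r //.
case/dvdnP=> t cE; move: c_lt; rewrite cE mulnC ltn_pmul2l ?expn_gt0 //.
by case: t {cE} => [|[|]] //= _; rewrite ?muln0 ?muln1 // expn_eq0 mul1n.
Qed.

Lemma coord_sum_even_double (A : finZmodType) (ms : seq nat) (g : seq A) c :
  (forall i, i < size ms -> 2 %| nth 0 c i)%N -> exists a, a + a = coord_sum ms g c 0.
Proof.
move=> c_even; exists (coord_sum ms g (mkseq (fun i => nth 0 c i %/ 2)%N (size ms)) 0).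
rewrite /coord_sum !addr0 -big_split /=; apply: eq_bigr => i _.
by rewrite -mulrnDr nth_mkseq // addnn -muln2 divnK ?c_even.
Qed.

Section InvolutionCoordinates.
Variables (A : finZmodType) (g : seq A) (n : nat) (ks : seq nat) (Q : {set A}).
Hypotheses (ks_ge2 : all (fun k => 2 <= k)%N ks) (oddQ : odd #|Q|).
Local Notation ms := (nseq n 2 ++ [seq 2 ^ k | k <- ks])%N.
Hypothesis decQ : decomp ms g Q.

Let case2_rep := case2_coord_rep g n ks_ge2 (subgroup0 (decomp_subgroup decQ)).

Lemma involution_case2_elem s : s + s = 0 ->
  exists xs zs, [/\ size xs = n, size zs = size ks & s = case2_elem g n ks xs zs].
Proof.
move=> ss; have [c [q rep]] := decomp_coord_exists decQ s.
have /and4P[/eqP sc /(all2_ltnP sc) c_lt Qq _] := rep; rewrite size_two_moduli in sc c_lt.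
have := coord_rep_double decQ rep; rewrite ss.
case/(decomp_coord_unique decQ (coord_rep0 decQ)) => /esym c2 /esym qq.
have q0 := odd_subgroup_involution (decomp_subgroup decQ) oddQ Qq qq.
have c2i i : (i < n + size ks)%N -> ((nth 0 c i * 2) %% nth 0 ms i = 0)%N.
  move=> i_lt; have := congr1 (fun t => nth 0%N t i) c2.
  by rewrite nth_mkseq ?nth_nseq ?if_same // size_two_moduli.
set xs := mkseq (fun i => nth 0%N c i == 1%N) n.
set zs := mkseq (fun j => nth 0%N c (n + j) != 0%N) (size ks).
exists xs, zs; rewrite !size_mkseq; split=> //.
suff cE : c = case2_coords n ks xs zs.
  rewrite (coord_rep_sum rep) q0 cE.
  by rewrite -(coord_rep_sum (case2_rep _ _)).
apply: (@eq_from_nth _ 0%N) => [|i]; rewrite ?size_case2_coords // sc => i_lt.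
have := c2i _ i_lt; have := c_lt _ i_lt; rewrite nth_two_moduli //.
case: (ltnP i n) => [i_n|n_i].
  by rewrite /case2_coords nth_mkseq // i_n nth_mkseq // => /bit_of_lt2.
have [j j_lt iE] := high_index n_i i_lt; rewrite iE addKn nth_case2_coords_high // nth_mkseq //.
exact: double_mod_pow2_eq0 (two_moduli_ge2 ks_ge2 j_lt).
Qed.

Lemma case2_elem_double xs zs : ~~ has id xs -> exists a, a + a = case2_elem g n ks xs zs.
Proof.
move=> no_x; rewrite (coord_rep_sum (case2_rep xs zs)).
apply: coord_sum_even_double => i; rewrite size_two_moduli => i_lt.
case: (ltnP i n) => [i_n|n_i].
  rewrite /case2_coords nth_mkseq // i_n; case: (boolP (nth false xs i)) => // x_i.
  case/negP: no_x; apply/(has_nthP (a := id) false); exists i => //.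
  by rewrite ltnNge; apply: contraL x_i => /(nth_default false)->.
have [j j_lt ->] := high_index n_i i_lt; rewrite nth_case2_coords_high // dvdn_mull //.
have := two_moduli_ge2 ks_ge2 j_lt.
by case: (nth 0%N ks j) => [|[|k]] // _; rewrite expnS dvdn_mulr.
Qed.

End InvolutionCoordinates.

Section Structure.
Variable A : finZmodType.

Lemma zmod_cents (X Y : {set A}) : X \subset 'C(Y)%g.
Proof. by apply/centsP => x _ y _; apply: zmod_mulgC. Qed.

Lemma bigdprod_cycle_mem (b : seq A) (G : {group A}) x :
  (\big[dprod/1]_(y <- b) <[y]> = G)%g -> x \in b -> x \in G.
Proof.
elim: b G => [|y b IH] G //; rewrite big_cons => /dprodP[[K G' _ eG'] <- _ _].
rewrite inE eG' => /orP[/eqP->|xb].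
  by rewrite -[X in X \in _]mulg1 mem_mulg ?cycle_id.
by rewrite -[X in X \in _]mul1g mem_mulg // IH.
Qed.

Lemma map_const_nseq (T U : eqType) (f : T -> U) (s : seq T) u :
  {in s, forall x, f x = u} -> map f s = nseq (size s) u.
Proof.
by elim: s => //= x s IH fu; rewrite fu ?mem_head // IH // => y ys; rewrite fu // inE ys orbT.
Qed.

Lemma decomp_two_primary : exists n ks g (Q : {group A}),
  [/\ all (fun k => 2 <= k)%N ks, odd #|Q| & decomp (nseq n 2 ++ [seq 2 ^ k | k <- ks])%N g Q].
Proof.
pose G := [set: A]%G; have cG : abelian G by apply: zmod_cents.
have oddQ : odd #|'O_(2%N)^'(G)|%g.
  by have := pcore_pgroup (2%N)^' G; rewrite /pgroup p'natE // dvdn2 negbK.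
have [b defP ob] := abelian_structure (zmod_cents 'O_(2%N)(G)%g 'O_(2%N)(G)%g).
have ord_gt1 x : x \in b -> (1 < #[x]%g)%N.
  by move=> xb; have /allP := abelian_type_gt1 'O_(2%N)(G)%g; rewrite -ob; apply; apply: map_f.
have ord_2pow x : x \in b -> #[x]%g = (2 ^ logn 2 #[x]%g)%N.
  move=> xb; have := mem_p_elt (pcore_pgroup 2%N G) (bigdprod_cycle_mem defP xb).
  by move=> /part_pnat_id {1}<-; rewrite p_part.
set b1 := [seq x <- b | #[x]%g == 2%N]; set b2 := [seq x <- b | #[x]%g != 2%N].
have defA : ((\big[dprod/1]_(x <- b1 ++ b2) <[x]>) \x 'O_(2%N)^'(G) = [set: A])%g.
  have b12 : perm_eq (b1 ++ b2) b by rewrite perm_filterC.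
  by rewrite (perm_big _ b12) defP; exact: nilpotent_pcoreC (abelian_nil cG).
exists (size b1), [seq logn 2 #[x]%g | x <- b2], (b1 ++ b2), 'O_(2%N)^'(G)%G; split=> //.
  apply/allP => k /mapP[x]; rewrite mem_filter => /andP[x2 xb] ->.
  by move: (logn 2 _) (ord_2pow x xb) (ord_gt1 x xb) x2 => e ->; case: e => [|[|]].
suff <- : map order (b1 ++ b2)
          = (nseq (size b1) 2 ++ [seq 2 ^ k | k <- [seq logn 2 #[x]%g | x <- b2]])%N.
  exact: decomp_of_dprod defA.
rewrite map_cat -map_comp; congr (_ ++ _).
  by apply: map_const_nseq => x; rewrite mem_filter => /andP[/eqP].
by apply/eq_in_map => x; rewrite mem_filter => /andP[_ /ord_2pow].
Qed.

End Structure.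

Section Order3Branch.
Variable A : finZmodType.

Lemma double_kernel_group : group_set [set x : A | x + x == 0].
Proof.
apply/group_setP; split=> [|x y]; rewrite !inE ?addr0 // => /eqP xx /eqP yy.
by rewrite zmodMgE addrACA xx yy addr0.
Qed.

Canonical double_kernel := Group double_kernel_group.

Lemma double_kernel_abelem : (2.-abelem double_kernel)%g.
Proof.
apply: exponent2_abelem; apply/exponentP => x; rewrite inE => /eqP xx.
by rewrite zmodXgE mulr2n xx.
Qed.

Lemma order3_elem (s : A) : s != 0 -> s *+ 3 = 0 -> #[s]%g = 3%N.
Proof.
move=> s0 s3; apply/(prime_nt_dvdP (isT : prime 3)); first by rewrite order_eq1.
by rewrite order_dvdn zmodXgE s3.
Qed.

Lemma double_kernel_cycle_trivI (s : A) : #[s]%g = 3%N -> (double_kernel :&: <[s]> = 1)%g.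
Proof.
move=> os; apply/trivgP/subsetP => y; rewrite inE => /andP[Ey Cy]; rewrite inE -order_eq1.
have d2 : (#[y]%g %| 2)%N.
  by move: Ey; rewrite inE => /eqP yy; rewrite order_dvdn zmodXgE mulr2n yy.
have d3 : (#[y]%g %| 3)%N by rewrite -os orderE cardSg // cycle_subG.
by rewrite -dvdn1 -[1%N]/(gcdn 2 3) dvdn_gcd d2 d3.
Qed.

Lemma double_kernel_mul_cycle (s : A) :
    s + s = - s -> (forall x, x + x \in [set 0; s; -s]) ->
  (double_kernel * <[s]>)%g = [set: A].
Proof.
move=> ss dbl; apply/setP => x; rewrite in_setT.
have [x' Ex' [k ->]] : exists2 x', x' \in double_kernel & exists k, x = x' + s *+ k.
  have := dbl x; rewrite in_set3 => /or3P[] /eqP xx.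
  - by exists x; rewrite ?inE ?xx //; exists 0%N; rewrite addr0.
  - exists (x + s); last by exists 2%N; rewrite mulr2n ss addrK.
    by rewrite inE addrACA xx ss subrr.
  - exists (x - s); last by exists 1%N; rewrite subrK.
    by rewrite inE sub_double_sub xx ss subrr.
by rewrite -zmodXgE -zmodMgE mem_mulg ?mem_cycle.
Qed.

Lemma case3_of_order3_generator (H : {set A}) s :
  s != 0 -> H = [set 0; s; -s] -> s + s = - s -> (forall x, x + x \in H) -> case3 H.
Proof.
move=> s0 HE ss dbl; rewrite HE in dbl.
have s3 : s *+ 3 = 0 by rewrite mulrSr mulr2n ss addNr.
have os := order3_elem s0 s3.
have [b defE ob] := abelian_structure (abelem_abelian double_kernel_abelem).
have ob2 : map order b = nseq (size b) 2%N.
  have typeE := abelian_type_abelem double_kernel_abelem.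
  by rewrite ob typeE -(size_map order b) ob typeE size_nseq.
have defA : ((\big[dprod/1]_(x <- rcons b s) <[x]>) \x 1 = [set: A])%g.
  rewrite dprodg1 big_rcons /= defE dprodE ?zmod_cents ?double_kernel_cycle_trivI //.
  exact: double_kernel_mul_cycle ss dbl.
have := decomp_of_dprod defA; rewrite map_rcons ob2 os => decA.
exists (size b), (rcons b s); split=> //.
by rewrite nth_rcons ltnn eqxx HE -ss mulr2n.
Qed.

End Order3Branch.

Lemma case12_of_undoubled_involution (A : finZmodType) (H : {set A}) s :
  H = [set 0; s; -s] -> s + s = 0 -> (forall a, a + a <> s) -> case1 H \/ case2 H.
Proof.
move=> HE ss nh; rewrite set3_involution // in HE.
have [n [ks [g [Q [ks_ge2 oddQ decQ]]]]] := decomp_two_primary A.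
have [xs [zs [sxs szs sE]]] := involution_case2_elem ks_ge2 oddQ decQ ss.
have hasx : has id xs.
  by apply: contraT => /(case2_elem_double ks_ge2 decQ zs)[a]; rewrite -sE => /nh.
have n_gt0 : (0 < n)%N by rewrite -sxs; case: (xs) hasx.
have s0 : s != 0 by apply/eqP => s0; apply: (nh 0); rewrite addr0 s0.
case: ks => [|k ks] in ks_ge2 decQ zs szs sE *.
  left; exists n, g, Q; split=> //; first by rewrite cats0 in decQ.
  by rewrite HE cards2 eq_sym s0.
by right; exists n, (k :: ks), g, Q, xs, zs; split; split; rewrite // HE sE.
Qed.

Theorem theorem5p4 (A : finZmodType) (H : {set A}) :
  is_subgroup H ->
  (has_total_perfect_code H <-> case1 H \/ case2 H \/ case3 H).
Proof.
move=> sgH; split=> [/(has_total_perfect_codeP sgH)|cases].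
  case=> s [s0 HE [[ss nh]|[ss dbl]]].
    by case: (case12_of_undoubled_involution HE ss nh) => ?; [left | right; left].
  have ssN : s + s = - s by apply: double_eq_opp; rewrite // -HE.
  by right; right; exact: case3_of_order3_generator s0 HE ssN dbl.
apply/(has_total_perfect_codeP sgH).
case: cases => [|[]]; last exact: admissible_of_case3; last exact: admissible_of_case2.
exact: admissible_of_case1.
Qed.
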